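(* (i) Let $\beta:\mathbb{Z}\to\mathbb{C}$ have convergent increments and let $d:\mathcal{A}\to A$ be the invariant derivation $d(a)=[\beta(\mathbb{K}),a]$. Then there exists an operator $D:\mathcal{D}\to\mathcal{H}$ such that $[D,\pi(a)]f=\pi(d(a))f$ and $U_\varphi DU_\varphi^{-1}f=Df$ for all $f\in\mathcal{D}$, $a\in\mathcal{A}$, $\varphi\in[0,2\pi)$. Moreover, every such $D$ has the form $Df=\beta(\mathbb{K})f-f\alpha(\mathbb{K})$ for some sequence $\alpha:\mathbb{Z}\to\mathbb{C}$. (ii) Let $\beta:\mathbb{Z}\to\mathbb{C}$ have convergent increments and let $d:\mathcal{A}\to A$ be the covariant derivation $d(a)=[U\beta(\mathbb{K}),a]$. Then there exists an operator $D:\mathcal{D}\to\mathcal{H}$ such that $[D,\pi(a)]f=\pi(d(a))f$ and $U_\varphi DU_\varphi^{-1}f=e^{i\varphi}Df$ for all $f\in\mathcal{D}$, $a\in\mathcal{A}$, $\varphi\in[0,2\pi)$. Moreover, every such $D$ has the form $Df=U\beta(\mathbb{K})f-fU\alpha(\mathbb{K})$ for some sequence $\alpha:\mathbb{Z}\to\mathbb{C}$.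
   Context: Let $\{E_k\}$ be the canonical basis of $\ell^2(\mathbb{Z})$, $UE_k=E_{k+1}$, $\mathbb{K}E_k=kE_k$, $a(\mathbb{K})E_k=a(k)E_k$. $A$ is the C$^*$-algebra generated by $U$ and all $a(\mathbb{K})$ with $a$ having finite limits at $\pm\infty$; $\mathcal{A}$ is the algebra of finite sums $\sum_nU^na_n(\mathbb{K})$ with each $a_n$ eventually constant (constant on $k\ge k_0$ and on $k\le-k_0$ for some $k_0$). A function $\beta$ has convergent increments if $k\mapsto\beta(k)-\beta(k-1)$ has finite limits as $k\to\pm\infty$. $\mathcal{H}$ is the Hilbert space of Hilbert–Schmidt operators on $\ell^2(\mathbb{Z})$ with $\langle f,g\rangle=\mathrm{tr}(f^*g)$, each $f$ uniquely $f=\sum_nU^nf_n(\mathbb{K})$ with $\sum_{n,k}|f_n(k)|^2<\infty$. $\mathcal{D}\subset\mathcal{H}$ is the dense subspace of finite sums with each $f_n$ finitely supported. $\pi(a)f=af$, $\pi'(a)f=fa$ for $a\in A$ (both preserve $\mathcal{D}$ for $a\in\mathcal{A}$). $U_\varphi f=\sum_ne^{in\varphi}U^nf_n(\mathbb{K})$ for $\varphi\in[0,2\pi)$. *)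

From mathcomp Require Import all_boot all_order all_algebra.
From mathcomp Require Import all_classical all_reals all_analysis.
From mathcomp Require Export complex.
Import Order.TTheory GRing.Theory Num.Theory.

Set Implicit Arguments.
Unset Strict Implicit.
Unset Printing Implicit Defensive.

Local Open Scope ring_scope.
Local Open Scope complex_scope.

Section Defs.
Variable R : realType.
Local Notation C := R[i].

(* An operator f = \sum_n U^n f_n(K) on l^2(Z) is encoded by its coefficient
   family: f n k = f_n(k), i.e. f E_k = \sum_n f_n(k) E_(k+n).  This
   representation is unique. *)
Definition coef := int -> int -> C.

Definition addc (f g : coef) : coef := fun n k => f n k + g n k.
Definition subc (f g : coef) : coef := fun n k => f n k - g n k.
Definition scalec (c : C) (f : coef) : coef := fun n k => c * f n k.

Definition cvgC (u : nat -> C) (l : C) : Prop :=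
  forall e : R, 0 < e -> exists N : nat, forall n : nat, (N <= n)%N ->
    ComplexField.Normc.normc (u n - l) < e.

Definition conv_incr (beta : int -> C) : Prop :=
  (exists l : C, cvgC (fun n : nat => beta n%:Z - beta (n%:Z - 1)) l) /\
  (exists l : C, cvgC (fun n : nat => beta (- n%:Z) - beta (- n%:Z - 1)) l).

Definition ev_const (a : int -> C) : Prop :=
  exists k0 : int, (forall k, k0 <= k -> a k = a k0) /\
                   (forall k, k <= - k0 -> a k = a (- k0)).

(* An element of the dense algebra \mathcal{A}: a finite sum
   \sum_{(n, a_n) in s} U^n a_n(K) with every a_n eventually constant. *)
Definition calA_elt := seq (int * (int -> C)).
Definition in_calA (s : calA_elt) : Prop :=
  forall i : nat, (i < size s)%N -> ev_const (nth (0, fun _ => 0) s i).2.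

(* (U^m c(K)) * f  and  f * (U^m c(K)), using a(K) U^n = U^n a(K+n). *)
Definition mon_l (m : int) (c : int -> C) (f : coef) : coef :=
  fun p k => c (k + p - m) * f (p - m) k.
Definition mon_r (f : coef) (m : int) (c : int -> C) : coef :=
  fun p k => f (p - m) (k + m) * c k.

(* pi(a) f = a f  for a in \mathcal{A} given as a finite sum. *)
Definition lmul (s : calA_elt) (f : coef) : coef :=
  fun p k => \sum_(t <- s) mon_l t.1 t.2 f p k.

Definition in_calD (f : coef) : Prop :=
  exists N : nat, forall n k : int,
    ((N < `|n|)%N \/ (N < `|k|)%N) -> f n k = 0.

(* Hilbert-Schmidt: \sum_{n,k} |f_n(k)|^2 < oo (bounded partial sums of a
   nonnegative family over Z x Z). *)
Definition in_calH (f : coef) : Prop :=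
  exists M : R, forall N : nat,
    \sum_(i < (2 * N).+1) \sum_(j < (2 * N).+1)
       ComplexField.Normc.normc (f (i%:Z - N%:Z) (j%:Z - N%:Z)) ^+ 2 <= M.

Definition expi (x : R) : C := cos x +i* sin x.

Definition Uphi (phi : R) (f : coef) : coef :=
  fun n k => expi (n%:~R * phi) * f n k.
Definition Uphi_inv (phi : R) (f : coef) : coef :=
  fun n k => expi (- (n%:~R * phi)) * f n k.

Definition operator_D_H (D : coef -> coef) : Prop :=
  (forall f, in_calD f -> in_calH (D f)) /\
  (forall f g, in_calD f -> in_calD g -> D (addc f g) = addc (D f) (D g)) /\
  (forall (c : C) f, in_calD f -> D (scalec c f) = scalec c (D f)).

(* [D, pi(a)] f = pi(d(a)) f  for all f in \mathcal{D}, a in \mathcal{A},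
   where d(a) = [X, a] with X = U^m beta(K) (m = 0: beta(K), m = 1: U beta(K));
   d(a) f = X (a f) - a (X f). *)
Definition implements_derivation (m : int) (beta : int -> C) (D : coef -> coef)
  : Prop :=
  forall s, in_calA s -> forall f, in_calD f ->
    subc (D (lmul s f)) (lmul s (D f)) =
    subc (mon_l m beta (lmul s f)) (lmul s (mon_l m beta f)).

Definition phi_covariant (m : int) (D : coef -> coef) : Prop :=
  forall phi : R, 0 <= phi -> phi < 2 * pi -> forall f, in_calD f ->
    Uphi phi (D (Uphi_inv phi f)) = scalec (expi (m%:~R * phi)) (D f).

Definition good_D (m : int) (beta : int -> C) (D : coef -> coef) : Prop :=
  operator_D_H D /\ implements_derivation m beta D /\ phi_covariant m D.

End Defs.

(** Left multiplication by X = U^m beta(K) maps finite sums to Hilbert-Schmidt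
   operators, implements d = [X, .] and is U_phi-covariant of weight m, which
   gives existence.  Conversely, if D is such an operator, D - L_X commutes with
   left multiplication by every element of \mathcal{A}.  Covariance, tested at
   phi = pi / |p - m|, forces it to send diagonal operators a(K) to the m-th
   diagonal.  Writing f = \sum_n U^n f_n(K) chi_N with chi_N the projection onto
   |k| <= N, one gets (D - L_X) f = - f U^m alpha(K), where alpha(k) is read off
   the image of the rank-one projection onto E_(k+m). *)

From Pilot Require Import Defs.
From mathcomp Require Import all_boot all_order all_algebra.
From mathcomp Require Import all_classical all_reals all_analysis.
From mathcomp Require Import complex.
From mathcomp Require Import zify ring lra.
Import Order.TTheory GRing.Theory Num.Theory.
Set Implicit Arguments.
Unset Strict Implicit.
Unset Printing Implicit Defensive.
Local Open Scope ring_scope.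
Local Open Scope complex_scope.

Definition box (N : nat) : seq int := [seq i%:Z - N%:Z | i <- iota 0 (2 * N).+1].

Lemma mem_box N n : (n \in box N) = (`|n| <= N)%N.
Proof.
apply/mapP/idP => [[i /[!mem_iota] hi ->]|hn]; first lia.
by exists (absz (n + N%:Z)); [rewrite mem_iota; lia | lia].
Qed.

Lemma box_uniq N : uniq (box N).
Proof. by rewrite map_inj_uniq ?iota_uniq // => i j /addIr [->]. Qed.

Lemma big_box {V : nmodType} N (F : int -> V) :
  \sum_(i < (2 * N).+1) F (i%:Z - N%:Z) = \sum_(n <- box N) F n.
Proof. by rewrite big_map -(big_mkord xpredT (fun i => F (i%:Z - N%:Z))). Qed.

Lemma big_box_single {V : nmodType} N n0 (F : int -> V) :
  (forall n, n != n0 -> F n = 0) -> (forall n, (N < `|n|)%N -> F n = 0) ->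
  \sum_(n <- box N) F n = F n0.
Proof.
move=> F_n0 F_box; case: (leqP `|n0| N) => hn0.
  by rewrite (bigD1_seq n0) ?box_uniq ?mem_box //= big1 ?addr0.
rewrite F_box // big1_seq // => n /[!mem_box] hn.
by apply: F_n0; apply: contraTneq hn => ->; rewrite -ltnNge.
Qed.

Lemma uniq_sub_ler_sum {R : numDomainType} {I : eqType} (s s' : seq I) (F : I -> R) :
  uniq s -> uniq s' -> {subset s <= s'} -> (forall i, 0 <= F i) ->
  \sum_(i <- s) F i <= \sum_(i <- s') F i.
Proof.
move=> us us' ss' F_ge0.
have perm_s : perm_eq [seq i <- s' | i \in s] s.
  apply: uniq_perm; rewrite ?filter_uniq // => i; rewrite mem_filter.
  by apply/andP/idP => [[]//|si]; split; last exact: ss'.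
have -> : \sum_(i <- s) F i = \sum_(i <- s' | i \in s) F i.
  by rewrite -[RHS]big_filter (perm_big _ perm_s).
by rewrite [leRHS](bigID (mem s)) /= lerDl sumr_ge0.
Qed.

Lemma big_box_le {R : numDomainType} K N (u : int -> R) :
  (forall n, 0 <= u n) -> (forall n, (K < `|n|)%N -> u n = 0) ->
  \sum_(n <- box N) u n <= \sum_(n <- box K) u n.
Proof.
move=> u_ge0 u_box; rewrite (bigID (mem (box K))) /= [X in _ + X]big1 ?addr0.
  rewrite -big_filter; apply: uniq_sub_ler_sum; rewrite ?filter_uniq ?box_uniq //.
  by move=> n; rewrite mem_filter => /andP[].
by move=> n /[!mem_box]; rewrite -ltnNge; apply: u_box.
Qed.

Section Coefficients.
Variable R : realType.
Local Notation C := R[i].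
Local Notation normc := ComplexField.Normc.normc.

Definition boxed (N : nat) (f : coef R) : Prop :=
  forall n k : int, (N < `|n|)%N \/ (N < `|k|)%N -> f n k = 0.

Lemma in_calD_calH (f : coef R) : in_calD f -> in_calH f.
Proof.
case=> K f_box; pose h n k := normc (f n k) ^+ 2.
have h_ge0 n k : 0 <= h n k by rewrite sqr_ge0.
have h_box n k : (K < `|n|)%N \/ (K < `|k|)%N -> h n k = 0.
  by move=> nk; rewrite /h f_box // ComplexField.Normc.normc0 expr0n.
exists (\sum_(n <- box K) \sum_(k <- box K) h n k) => N.
rewrite (big_box _ (fun n => \sum_(j < _) h n (j%:Z - N%:Z))).
under eq_bigr do rewrite (big_box _ (h _)).
apply: (@le_trans _ _ (\sum_(n <- box N) \sum_(k <- box K) h n k)).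
  by apply: ler_sum => n _; apply: big_box_le => // k hk; apply: h_box; right.
apply: big_box_le => [n|n hn]; first exact: sumr_ge0.
by apply: big1 => k _; apply: h_box; left.
Qed.

Lemma mon_l_boxed m (beta : int -> C) N f :
  boxed N f -> boxed (N + `|m|) (mon_l m beta f).
Proof. by move=> f_box n k nk; rewrite /mon_l f_box ?mulr0 //; lia. Qed.

Lemma mon_l_operator m (beta : int -> C) : operator_D_H (mon_l m beta).
Proof.
split; [|split] => [f [N f_box]|f g _ _|c f _].
- by apply: in_calD_calH; exists (N + `|m|)%N; apply: mon_l_boxed.
- by apply/funext => n; apply/funext => k; rewrite /mon_l /Defs.addc mulrDr.
- by apply/funext => n; apply/funext => k; rewrite /mon_l /Defs.scalec mulrCA.
Qed.

Lemma expiD (a b : R) : expi a * expi b = expi (a + b).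
Proof.
rewrite /expi cosD sinD.
by apply/eqP; rewrite eq_complex /=; apply/andP; split; apply/eqP; ring.
Qed.

Lemma mon_l_phi_covariant m (beta : int -> C) : phi_covariant m (mon_l m beta).
Proof.
move=> phi _ _ f _; apply/funext => n; apply/funext => k.
rewrite /Uphi /Uphi_inv /mon_l /Defs.scalec [beta _ * _]mulrCA !mulrA expiD.
by congr (expi _ * _ * _); rewrite intrB; ring.
Qed.

Lemma good_D_mon_l m (beta : int -> C) : good_D m beta (mon_l m beta).
Proof.
split; [exact: mon_l_operator | split => //]; exact: mon_l_phi_covariant.
Qed.

Lemma expi_eq_cosB (a b : R) : expi a = expi b -> cos (a - b) = 1.
Proof. by case=> ca sb; rewrite cosB ca sb -!expr2 cos2Dsin2. Qed.

Lemma cos_intr_mul_pi_div (d : int) :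
  d != 0 -> cos (d%:~R * (pi / `|d%:~R|)) = -1 :> R.
Proof.
rewrite -(intr_eq0 R); case: (ltrgt0P (d%:~R : R)) => // d_sgn _.
- by rewrite mulrCA divff ?gt_eqF // mulr1 cospi.
- by rewrite invrN !mulrN mulrCA divff ?lt_eqF // mulr1 cosN cospi.
Qed.

Lemma expi_separates (p q : int) : p != q ->
  exists2 phi : R, 0 <= phi < 2 * pi & expi (p%:~R * phi) != expi (q%:~R * phi).
Proof.
rewrite -subr_eq0 => pq; exists (pi / `|(p - q)%:~R|).
  have d_ge1 : 1 <= `|(p - q)%:~R : R| by rewrite -intr_norm ler1z; lia.
  have pi_gt0 : (0 : R) < pi := pi_gt0 R.
  rewrite divr_ge0 ?pi_ge0 //= ltr_pdivrMr ?(lt_le_trans ltr01) //; nra.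
apply/eqP => /expi_eq_cosB; rewrite -mulrBl -intrB cos_intr_mul_pi_div //.
lra.
Qed.

Definition diag (a : int -> C) : coef R := fun n k => if n == 0 then a k else 0.
Definition ind (N : nat) : int -> C := fun k => (`|k| <= N)%N%:R.
Definition delta (j : int) : int -> C := fun k => (k == j)%:R.

Definition boxA (N : nat) (f : coef R) : calA_elt R := [seq (n, f n) | n <- box N].

Lemma ev_const_finsupp (a : int -> C) K :
  (forall k, (K < `|k|)%N -> a k = 0) -> ev_const a.
Proof. by move=> a_supp; exists K.+1%:Z; split => k hk; rewrite !a_supp //; lia. Qed.

Lemma diag_boxed (a : int -> C) K :
  (forall k, (K < `|k|)%N -> a k = 0) -> boxed K (diag a).
Proof.
move=> a_supp n k [hn|hk]; rewrite /diag; case: eqP => // n0.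
  by move: hn; rewrite n0.
exact: a_supp.
Qed.

Lemma boxA_calA N f : boxed N f -> in_calA (boxA N f).
Proof.
move=> f_box i; rewrite size_map => hi; rewrite (nth_map 0) //=.
by apply: (ev_const_finsupp (K := N)) => k hk; apply: f_box; right.
Qed.

Lemma lmul_seq1 n (a : int -> C) g : lmul [:: (n, a)] g = mon_l n a g.
Proof. by apply/funext => p; apply/funext => k; rewrite /lmul big_seq1. Qed.

Lemma mon_l0_diag (a b : int -> C) : mon_l 0 a (diag b) = diag (fun k => a k * b k).
Proof.
apply/funext => p; apply/funext => k; rewrite /mon_l /diag !subr0.
by case: eqP => [->|_]; rewrite ?addr0 ?mulr0.
Qed.

Lemma lmul_boxA N f g p k :
  lmul (boxA N f) g p k = \sum_(n <- box N) mon_l n (f n) g p k.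
Proof. by rewrite /lmul big_map. Qed.

Lemma lmul_boxA_diag N f : boxed N f -> lmul (boxA N f) (diag (ind N)) = f.
Proof.
move=> f_box; apply/funext => p; apply/funext => k.
rewrite lmul_boxA (big_box_single (n0 := p)) => [|n|n hn].
- rewrite /mon_l /diag /ind subrr eqxx addrK.
  by case: leqP => hk; rewrite ?mulr1 // mulr0 f_box //; right.
- by rewrite /mon_l /diag subr_eq0 eq_sym => /negbTE ->; rewrite mulr0.
- by rewrite /mon_l f_box ?mul0r //; left.
Qed.

Lemma lmul_boxA_row N f m (g : coef R) p k :
  boxed N f -> (forall q k, q != m -> g q k = 0) ->
  lmul (boxA N f) g p k = f (p - m) (k + m) * g m k.
Proof.
move=> f_box g_row; rewrite lmul_boxA (big_box_single (n0 := p - m)) => [|n|n hn].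
- by rewrite /mon_l; congr (f _ _ * g _ _); ring.
- move=> nm; rewrite /mon_l g_row ?mulr0 //.
  by apply: contraNneq nm => <-; lia.
- by rewrite /mon_l f_box ?mul0r //; left.
Qed.
End Coefficients.

Arguments ind {R}.
Arguments delta {R}.

Section Uniqueness.
Variable R : realType.
Local Notation C := R[i].
Variables (m : int) (beta : int -> C) (D : coef R -> coef R).

Definition Dcomm (f : coef R) : coef R := Defs.subc (D f) (mon_l m beta f).

Lemma lmul_subc s (f g : coef R) :
  lmul s (Defs.subc f g) = Defs.subc (lmul s f) (lmul s g).
Proof.
apply/funext => p; apply/funext => k; rewrite /lmul /Defs.subc -sumrB.
by apply: eq_bigr => t _; rewrite /mon_l mulrBr.
Qed.

Lemma Dcomm_lmul s f : implements_derivation m beta D -> in_calA s -> in_calD f ->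
  Dcomm (lmul s f) = lmul s (Dcomm f).
Proof.
move=> hD s_A f_D; rewrite /Dcomm lmul_subc.
apply/funext => p; apply/funext => k.
have /(congr1 (fun F => F p k)) := hD s s_A f f_D; rewrite /Defs.subc.
by move/eqP; rewrite subr_eq => /eqP ->; ring.
Qed.

Lemma Uphi_inv_diag phi (a : int -> C) : Uphi_inv phi (diag a) = diag a.
Proof.
apply/funext => n; apply/funext => k; rewrite /Uphi_inv /diag.
case: eqP => [->|_]; last by rewrite mulr0.
by rewrite mul0r oppr0 /expi cos0 sin0 mul1r.
Qed.

Lemma phi_covariant_diag_row (a : int -> C) p k : phi_covariant m D ->
  in_calD (diag a) -> p != m -> D (diag a) p k = 0.
Proof.
move=> hcov a_D pm; have [phi /andP[phi_ge0 phi_lt] e_ne] := expi_separates R pm.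
have := congr1 (fun F => F p k) (hcov phi phi_ge0 phi_lt _ a_D).
rewrite Uphi_inv_diag /Uphi /Defs.scalec => /eqP.
by rewrite -subr_eq0 -mulrBl mulf_eq0 subr_eq0 (negbTE e_ne) => /eqP.
Qed.

Lemma Dcomm_diag_row (a : int -> C) p k : phi_covariant m D ->
  in_calD (diag a) -> p != m -> Dcomm (diag a) p k = 0.
Proof.
move=> hcov a_D pm; rewrite /Dcomm /Defs.subc phi_covariant_diag_row //.
by rewrite /mon_l /diag subr_eq0 (negbTE pm) mulr0 subrr.
Qed.

Lemma good_D_form : good_D m beta D -> exists alpha : int -> C,
  forall f, in_calD f -> D f = Defs.subc (mon_l m beta f) (mon_r f m alpha).
Proof.
case=> _ [hD hcov].
exists (fun k => - Dcomm (diag (delta (k + m))) m k) => f [N f_box].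
pose chi : coef R := diag (ind N).
have chi_D : in_calD chi.
  by exists N; apply: diag_boxed => k hk; rewrite /ind leqNgt hk.
have Dcomm_chi_row q k : q != m -> Dcomm chi q k = 0 by apply: Dcomm_diag_row.
have Dcomm_delta (k : int) : (`|(k + m)%R| <= N)%N ->
    Dcomm (diag (delta (k + m))) m k = Dcomm chi m k.
  move=> hk; have -> : diag (delta (k + m)) = lmul [:: (0, delta (k + m))] chi.
    rewrite lmul_seq1 mon_l0_diag; congr diag; apply/funext => j.
    by rewrite /delta /ind; case: eqP => [->|_]; rewrite ?hk ?mulr1 ?mul0r.
  rewrite Dcomm_lmul // ?lmul_seq1 /mon_l ?subr0 /delta ?eqxx ?mul1r //.
  move=> [|i] //= _; apply: (ev_const_finsupp (K := `|(k + m)%R|%N)) => j hj.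
  by rewrite /delta; case: eqP => // ej; move: hj; rewrite ej ltnn.
have Dcomm_f : Dcomm f = lmul (boxA N f) (Dcomm chi).
  by rewrite -[in LHS](lmul_boxA_diag f_box) Dcomm_lmul //; apply: boxA_calA.
apply/funext => p; apply/funext => k.
have -> : D f p k = mon_l m beta f p k + Dcomm f p k by rewrite addrC subrK.
rewrite Dcomm_f (lmul_boxA_row (m := m)) // /Defs.subc /mon_r.
case: (leqP `|(k + m)%R| N) => hk; first by rewrite Dcomm_delta // mulrN opprK.
by rewrite f_box ?mul0r ?subr0 ?addr0 //; right.
Qed.
End Uniqueness.

Theorem mainTheorem16 (R : realType) :
  (* (i) invariant derivation d(a) = [beta(K), a] *)
  (forall beta : int -> R[i], conv_incr beta ->
     (exists D : coef R -> coef R, good_D 0 beta D) /\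
     (forall D : coef R -> coef R, good_D 0 beta D ->
        exists alpha : int -> R[i], forall f : coef R, in_calD f ->
          D f = subc (mon_l 0 beta f) (mon_r f 0 alpha))) /\
  (* (ii) covariant derivation d(a) = [U beta(K), a] *)
  (forall beta : int -> R[i], conv_incr beta ->
     (exists D : coef R -> coef R, good_D 1 beta D) /\
     (forall D : coef R -> coef R, good_D 1 beta D ->
        exists alpha : int -> R[i], forall f : coef R, in_calD f ->
          D f = subc (mon_l 1 beta f) (mon_r f 1 alpha))).
Proof.
(* Convergent increments only ensure that d maps \mathcal{A} into A. *)
split=> beta _; split.
- by exists (mon_l 0 beta); apply: good_D_mon_l.
- by move=> D; apply: good_D_form.
- by exists (mon_l 1 beta); apply: good_D_mon_l.
- by move=> D; apply: good_D_form.
Qed.
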